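(* Let the Hamiltonians satisfy (H) and $F$ satisfy (F). Fix $n\ge0$, let $(U_i^{\alpha,n})_{\alpha,i}$ be given (with $U_0^{\alpha,n}=U_0^n$ for all $\alpha$) and compute $(U_i^{\alpha,n+1})_{\alpha,i}$ by the scheme (S). If there is $K\in\mathbb R$ with $K\le W_i^{\alpha,n}$ for all $i\ge0$ and $\alpha=1,\dots,N$, then $$\pi_\alpha^-(-K)\le p_{i,+}^{\alpha,n}\le\pi_\alpha^+(-K)\quad(i\ge1,\ \alpha=1,\dots,N),\qquad \underline p_\alpha(-K)\le p_{0,+}^{\alpha,n}\le\pi_\alpha^+(-K)\quad(\alpha=1,\dots,N).$$
   Context: Hamiltonians (H): $H_\alpha:\mathbb R\to\mathbb R$, $\alpha=1,\dots,N$, are Lipschitz continuous, coercive and quasi-convex (sublevel sets convex). There is $p_0^\alpha$ with $H_\alpha$ non-increasing on $(-\infty,p_0^\alpha]$ and non-decreasing on $[p_0^\alpha,\infty)$; $H_\alpha^-(p)=H_\alpha(\min(p,p_0^\alpha))$, $H_\alpha^+(p)=H_\alpha(\max(p,p_0^\alpha))$; $A_\alpha=\min_{\mathbb R}H_\alpha$. Junction function (F): $F:\mathbb R^N\to\mathbb R$ is piecewise $C^1$, strictly decreasing in each variable $p_\alpha$, and $F(p)\to+\infty$ as $(p_1)_-+\dots+(p_N)_-\to+\infty$ ($r_-=\max(-r,0)$). Generalized inverses: $\pi_\alpha^+(a)=\sup\{p:H_\alpha^+(p)=\max(a,A_\alpha)\}$, $\pi_\alpha^-(a)=\inf\{p:H_\alpha^-(p)=\max(a,A_\alpha)\}$.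 For every $K$ there is $\underline p(K)\in\mathbb R^N$ such that $F(p)\le K$ implies $p_\alpha\ge\underline p_\alpha(K)$ for all $\alpha$; such a choice is fixed. Scheme (S) (one time step): $p_{i,+}^{\alpha,n}=(U_{i+1}^{\alpha,n}-U_i^{\alpha,n})/\Delta x$, $p_{i,-}^{\alpha,n}=(U_i^{\alpha,n}-U_{i-1}^{\alpha,n})/\Delta x$; $\frac{U_i^{\alpha,n+1}-U_i^{\alpha,n}}{\Delta t}+\max\{H_\alpha^+(p_{i,-}^{\alpha,n}),H_\alpha^-(p_{i,+}^{\alpha,n})\}=0$ for $i\ge1$; $\frac{U_0^{n+1}-U_0^n}{\Delta t}+F(p_{0,+}^{1,n},\dots,p_{0,+}^{N,n})=0$. $W_i^{\alpha,n}=(U_i^{\alpha,n+1}-U_i^{\alpha,n})/\Delta t$. *)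

From Stdlib Require Import Reals Lra Lia List ClassicalEpsilon.
Open Scope R_scope.

(* Supremum / infimum of a set of reals (meaningful when a lub exists). *)
Definition Rsup (E : R -> Prop) : R :=
  epsilon (inhabits 0%R) (fun l => is_lub E l).
Definition Rinf (E : R -> Prop) : R := - Rsup (fun x => E (- x)).

Definition Lipschitz (H : R -> R) : Prop :=
  exists L, forall x y, Rabs (H x - H y) <= L * Rabs (x - y).
Definition coercive (H : R -> R) : Prop :=
  forall M, exists Rr, forall p, Rr < Rabs p -> M < H p.
Definition quasi_convex (H : R -> R) : Prop :=
  forall lam x y t, H x <= lam -> H y <= lam -> 0 <= t <= 1 ->
    H (t * x + (1 - t) * y) <= lam.
Definition nonincreasing_on_le (H : R -> R) (p0 : R) : Prop :=
  forall x y, x <= y <= p0 -> H y <= H x.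
Definition nondecreasing_on_ge (H : R -> R) (p0 : R) : Prop :=
  forall x y, p0 <= x <= y -> H x <= H y.

Definition Hminus (H : R -> R) (p0 : R) (p : R) : R := H (Rmin p p0).
Definition Hplus  (H : R -> R) (p0 : R) (p : R) : R := H (Rmax p p0).
Definition Amin (H : R -> R) : R := Rinf (fun y => exists p, y = H p).

Definition pi_plus (H : R -> R) (p0 a : R) : R :=
  Rsup (fun p => Hplus H p0 p = Rmax a (Amin H)).
Definition pi_minus (H : R -> R) (p0 a : R) : R :=
  Rinf (fun p => Hminus H p0 p = Rmax a (Amin H)).

(* ---------- vectors of R^N, coded as nat -> R, coordinates 0..N-1 ---------- *)
Definition upd (p : nat -> R) (a : nat) (t : R) : nat -> R :=
  fun b => if Nat.eqb b a then t else p b.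

Fixpoint sumN (N : nat) (f : nat -> R) : R :=
  match N with O => 0 | S n => sumN n f + f n end.

Definition negpart (r : R) : R := Rmax (- r) 0.

Definition closeN (N : nat) (p q : nat -> R) (d : R) : Prop :=
  forall a, (a < N)%nat -> Rabs (q a - p a) < d.

Definition continuousN (N : nat) (G : (nat -> R) -> R) : Prop :=
  forall p eps, 0 < eps -> exists del, 0 < del /\
    forall q, closeN N p q del -> Rabs (G q - G p) < eps.

Definition closedN (N : nat) (A : (nat -> R) -> Prop) : Prop :=
  forall p, ~ A p -> exists eps, 0 < eps /\ forall q, closeN N p q eps -> ~ A q.

Definition C1N (N : nat) (G : (nat -> R) -> R) : Prop :=
  exists dG : nat -> (nat -> R) -> R,
    forall a, (a < N)%nat ->
      (forall p, derivable_pt_lim (fun t => G (upd p a t)) (p a) (dG a p)) /\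
      continuousN N (dG a).

Definition piecewise_C1 (N : nat) (F : (nat -> R) -> R) : Prop :=
  continuousN N F /\
  exists l : list (((nat -> R) -> Prop) * ((nat -> R) -> R)),
    (forall p, exists A G, In (A, G) l /\ A p) /\
    (forall A G, In (A, G) l ->
       closedN N A /\ C1N N G /\ forall p, A p -> F p = G p).

Definition depends_on_first (N : nat) (F : (nat -> R) -> R) : Prop :=
  forall p q, (forall a, (a < N)%nat -> p a = q a) -> F p = F q.
Definition strictly_decreasing_each (N : nat) (F : (nat -> R) -> R) : Prop :=
  forall p a t, (a < N)%nat -> p a < t -> F (upd p a t) < F p.
Definition F_coercive (N : nat) (F : (nat -> R) -> R) : Prop :=
  forall M, exists Rr, forall p, Rr < sumN N (fun a => negpart (p a)) -> M < F p.

(* U a i = U_i^{a+1} : branch a in 0..N-1, grid index i >= 0 *)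
Definition pplus (U : nat -> nat -> R) (dx : R) (a i : nat) : R :=
  (U a (S i) - U a i) / dx.
Definition pminus (U : nat -> nat -> R) (dx : R) (a i : nat) : R :=
  (U a i - U a (pred i)) / dx.

From Stdlib Require Import Reals Lra Lia ClassicalEpsilon.
Open Scope R_scope.

(* Only the lower bound K <= W and the Lipschitz continuity and coercivity of
   the Hamiltonians matter.  At a branch node i >= 1 the scheme gives
   W + max(H^+(p_{i,-}), H^-(p_{i,+})) = 0, so K <= W bounds both H^+(p_{i,-})
   and H^-(p_{i,+}) by -K; since p_{i+1,-} = p_{i,+}, this also bounds
   H^+(p_{i,+}) for every i >= 0.  A continuous function that tends to +oo at
   +oo and lies below a level c at p meets c somewhere to the right of p, so p
   is at most the supremum of the level set: this is the inequality
   p <= pi^+(-K), and, after the reflection x |-> -x, pi^-(-K) <= p.  At the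
   junction, F(p_{0,+}) = -W_0 <= -K, which is exactly the hypothesis of the
   lower bound underline p. *)

Lemma Rsup_upper_bound (E : R -> Prop) (M x : R) :
  (forall y, E y -> y <= M) -> E x -> x <= Rsup E.
Proof.
  intros HM Ex.
  destruct (completeness E) as [m Hm]; [now exists M | now exists x |].
  assert (Hlub : is_lub E (Rsup E)).
  { unfold Rsup; apply epsilon_spec; now exists m. }
  now apply Hlub.
Qed.

Lemma Lipschitz_constant_nonneg (g : R -> R) (L : R) :
  (forall x y, Rabs (g x - g y) <= L * Rabs (x - y)) -> 0 <= L.
Proof.
  intros HL; pose proof (HL 1 0) as H10; pose proof (Rabs_pos (g 1 - g 0)).
  rewrite Rminus_0_r, Rabs_R1 in H10; lra.
Qed.

Lemma Lipschitz_continuity (g : R -> R) : Lipschitz g -> continuity g.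
Proof.
  intros [L HL] x eps Heps.
  pose proof (Lipschitz_constant_nonneg g L HL) as L_ge0.
  exists (eps / (L + 1)); split; [apply Rdiv_lt_0_compat; lra |].
  intros y [_ Hy]; simpl in *; unfold R_dist in *.
  assert (L * Rabs (y - x) <= L * (eps / (L + 1))) by (apply Rmult_le_compat_l; lra).
  assert (L * (eps / (L + 1)) < eps).
  { apply (Rmult_lt_reg_r (L + 1)); [lra |].
    unfold Rdiv; rewrite Rmult_assoc, (Rmult_assoc eps), Rinv_l by lra; nra. }
  pose proof (HL y x); lra.
Qed.

Lemma Lipschitz_comp_contraction (h m : R -> R) :
  Lipschitz h -> (forall x y, Rabs (m x - m y) <= Rabs (x - y)) ->
  Lipschitz (fun x => h (m x)).
Proof.
  intros [L HL] Hm; exists L; intros x y.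
  eapply Rle_trans; [apply HL |].
  apply Rmult_le_compat_l; [exact (Lipschitz_constant_nonneg h L HL) | apply Hm].
Qed.

Lemma Rmax_contraction (p0 x y : R) :
  Rabs (Rmax x p0 - Rmax y p0) <= Rabs (x - y).
Proof.
  apply Rabs_le; pose proof (Rle_abs (x - y)); pose proof (Rle_abs (- (x - y))).
  rewrite Rabs_Ropp in *; unfold Rmax; destruct (Rle_dec x p0), (Rle_dec y p0); lra.
Qed.

Lemma Rmin_opp_contraction (p0 x y : R) :
  Rabs (Rmin (- x) p0 - Rmin (- y) p0) <= Rabs (x - y).
Proof.
  apply Rabs_le; pose proof (Rle_abs (x - y)); pose proof (Rle_abs (- (x - y))).
  rewrite Rabs_Ropp in *; unfold Rmin; destruct (Rle_dec (- x) p0), (Rle_dec (- y) p0); lra.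
Qed.

Lemma coercive_comp_eventually (h m : R -> R) (A c : R) :
  coercive h -> (forall x, A < x -> x <= Rabs (m x)) ->
  exists B, forall x, B < x -> c < h (m x).
Proof.
  intros Hc Hm; destruct (Hc c) as [r Hr]; exists (Rmax A r); intros x Hx.
  apply Hr; pose proof (Rmax_l A r); pose proof (Rmax_r A r); pose proof (Hm x); lra.
Qed.

Lemma le_Rsup_level_set (g : R -> R) (c B p : R) :
  continuity g -> (forall x, B < x -> c < g x) -> g p <= c ->
  p <= Rsup (fun x => g x = c).
Proof.
  intros gc Hbig Hp.
  assert (Hq : exists q, p <= q /\ g q = c).
  { destruct (Req_dec (g p) c) as [E | E]; [now exists p; split; [lra |] |].
    set (b := Rmax B p + 1).
    assert (Hpb : p < b) by (unfold b; pose proof (Rmax_r B p); lra).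
    assert (Hgb : c < g b) by (apply Hbig; unfold b; pose proof (Rmax_l B p); lra).
    assert (gc' : continuity (fun x => g x - c)).
    { apply continuity_minus; [exact gc | apply continuity_const; now intros ? ?]. }
    destruct (IVT _ p b gc' Hpb) as [z [Hz Hgz]]; try lra.
    exists z; split; lra. }
  destruct Hq as [q [Hpq Hgq]].
  apply (Rle_trans _ q _ Hpq), (Rsup_upper_bound _ B); [| exact Hgq].
  intros x Hx; destruct (Rle_lt_dec x B) as [Hle | Hlt]; [exact Hle |].
  specialize (Hbig x Hlt); lra.
Qed.

Lemma le_pi_plus (h : R -> R) (p0 K p : R) :
  Lipschitz h -> coercive h -> Hplus h p0 p <= K -> p <= pi_plus h p0 K.
Proof.
  intros Hl Hc Hp; unfold pi_plus.
  destruct (coercive_comp_eventually h (fun x => Rmax x p0) 0 (Rmax K (Amin h)) Hc)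
    as [B HB].
  { intros x Hx; pose proof (Rmax_l x p0); rewrite Rabs_pos_eq; lra. }
  apply (le_Rsup_level_set _ _ B); [| exact HB |].
  - apply Lipschitz_continuity, (Lipschitz_comp_contraction h (fun x => Rmax x p0)).
    + exact Hl.
    + apply Rmax_contraction.
  - pose proof (Rmax_l K (Amin h)); lra.
Qed.

Lemma pi_minus_le (h : R -> R) (p0 K p : R) :
  Lipschitz h -> coercive h -> Hminus h p0 p <= K -> pi_minus h p0 K <= p.
Proof.
  intros Hl Hc Hp; unfold pi_minus, Rinf.
  destruct (coercive_comp_eventually h (fun x => Rmin (- x) p0) (Rmax 0 (- p0))
              (Rmax K (Amin h)) Hc) as [B HB].
  { intros x Hx; pose proof (Rmax_l 0 (- p0)); pose proof (Rmax_r 0 (- p0)).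
    rewrite Rmin_left, Rabs_Ropp, Rabs_pos_eq; lra. }
  enough (- p <= Rsup (fun x => Hminus h p0 (- x) = Rmax K (Amin h))) by lra.
  apply (le_Rsup_level_set _ _ B); [| exact HB |].
  - apply Lipschitz_continuity, (Lipschitz_comp_contraction h (fun x => Rmin (- x) p0)).
    + exact Hl.
    + apply Rmin_opp_contraction.
  - unfold Hminus in *; rewrite Ropp_involutive; pose proof (Rmax_l K (Amin h)); lra.
Qed.

Lemma Rmax_le_of_balance (w u v K : R) :
  w + Rmax u v = 0 -> K <= w -> u <= - K /\ v <= - K.
Proof. intros; pose proof (Rmax_l u v); pose proof (Rmax_r u v); lra. Qed.

Theorem proposition3p3
  (N : nat) (HN : (1 <= N)%nat)
  (H : nat -> R -> R) (p0 : nat -> R)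
  (H_lip : forall a, (a < N)%nat -> Lipschitz (H a))
  (H_coer : forall a, (a < N)%nat -> coercive (H a))
  (H_qc : forall a, (a < N)%nat -> quasi_convex (H a))
  (H_dec : forall a, (a < N)%nat -> nonincreasing_on_le (H a) (p0 a))
  (H_inc : forall a, (a < N)%nat -> nondecreasing_on_ge (H a) (p0 a))
  (F : (nat -> R) -> R)
  (F_dep : depends_on_first N F)
  (F_pw : piecewise_C1 N F)
  (F_decr : strictly_decreasing_each N F)
  (F_coer : F_coercive N F)
  (plow : R -> nat -> R)
  (plow_spec : forall K p, F p <= K -> forall a, (a < N)%nat -> plow K a <= p a)
  (dx dt : R) (Hdx : 0 < dx) (Hdt : 0 < dt)
  (U V : nat -> nat -> R) (U0 V0 : R)
  (HU0 : forall a, (a < N)%nat -> U a O = U0)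
  (HV0 : forall a, (a < N)%nat -> V a O = V0)
  (Sbranch : forall a i, (a < N)%nat -> (1 <= i)%nat ->
     (V a i - U a i) / dt
       + Rmax (Hplus (H a) (p0 a) (pminus U dx a i))
              (Hminus (H a) (p0 a) (pplus U dx a i)) = 0)
  (Sjunction : (V0 - U0) / dt + F (fun a => pplus U dx a O) = 0)
  (K : R)
  (HK : forall a i, (a < N)%nat -> K <= (V a i - U a i) / dt) :
  (forall a i, (a < N)%nat -> (1 <= i)%nat ->
     pi_minus (H a) (p0 a) (- K) <= pplus U dx a i <= pi_plus (H a) (p0 a) (- K))
  /\
  (forall a, (a < N)%nat ->
     plow (- K) a <= pplus U dx a O <= pi_plus (H a) (p0 a) (- K)).
Proof.
  assert (Hbranch : forall a i, (a < N)%nat -> (1 <= i)%nat ->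
            Hplus (H a) (p0 a) (pminus U dx a i) <= - K /\
            Hminus (H a) (p0 a) (pplus U dx a i) <= - K).
  { intros a i Ha Hi; exact (Rmax_le_of_balance _ _ _ _ (Sbranch a i Ha Hi) (HK a i Ha)). }
  assert (Hupper : forall a i, (a < N)%nat -> pplus U dx a i <= pi_plus (H a) (p0 a) (- K)).
  { intros a i Ha; apply le_pi_plus; auto.
    exact (proj1 (Hbranch a (S i) Ha ltac:(lia))). }
  split.
  - intros a i Ha Hi; split; [| auto].
    apply pi_minus_le; auto; exact (proj2 (Hbranch a i Ha Hi)).
  - intros a Ha; split; [| auto].
    apply (plow_spec (- K) (fun b => pplus U dx b O)); [| exact Ha].
    pose proof (HK a O Ha) as HK0; rewrite HU0, HV0 in HK0 by exact Ha; lra.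
Qed.
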